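(* Let $\langle \mathcal{B},\le_t,\le_k\rangle$ be a complete, infinitely distributive bilattice with negation satisfying the infinitary interlacing conditions, with $\mathcal U$ and $\mathcal O$ the bottom and top of $\le_k$. Let $I$ be an interpretation (a function from the Herbrand base to $\mathcal B$), let $B$ be a closed formula and $\alpha\in\mathcal B$. Then $B\equiv_I\alpha$ if and only if $I(B)=\alpha$ and $I_{\mathcal O}(B)=\alpha$.
   Context: In the bilattice, $\wedge,\vee$ denote meet and join for $\le_t$ and $\otimes,\oplus$ meet and join for $\le_k$; $\bigwedge,\bigvee,\bigotimes,\bigoplus$ are the infinitary versions. Infinitely distributive means all finitary and infinitary distributive laws connecting $\wedge,\vee,\otimes,\oplus$ hold; the infinitary interlacing conditions mean each of these finitary and infinitary meets and joins is monotone with respect to both orderings. A closed formula is built from ground literals (ground atoms $A$ and negated ground atoms $\neg A$) and elements of $\mathcal B$ using $\wedge,\vee,\otimes,\oplus$ and quantifiers $\exists,\forall$ ranging over closed terms. An interpretation $I$ is extended to closed formulas by $I(\neg A)=\neg I(A)$, $I(X\wedge Y)=I(X)\wedge I(Y)$ (similarly for $\vee,\otimes,\oplus$), $I(v)=v$ for $v\in\mathcal B$, $I(\exists x\,\phi(x))=\bigvee_{t} I(\phi(t))$ and $I(\forall x\,\phi(x))=\bigwedge_t I(\phi(t))$, $t$ ranging over closed terms. For interpretations $I,J$, write $I\le J$ (''$I$ is a part of $J$'') if for every ground atom $A$, $I(A)\neq\mathcal U$ implies $I(A)=J(A)$. For a closed formula $B$, $B\equiv_I\alpha$ means $J(B)=\alpha$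 for every interpretation $J$ with $I\le J$. $I_{\mathcal O}$ is the interpretation with $I_{\mathcal O}(A)=I(A)$ if $I(A)\neq\mathcal U$ and $I_{\mathcal O}(A)=\mathcal O$ otherwise. *)

From Stdlib Require Import ClassicalEpsilon.
Set Implicit Arguments.

Record bilattice_ops (B : Type) := {
  le_t : B -> B -> Prop;
  le_k : B -> B -> Prop;
  bigwedge  : forall I : Type, (I -> B) -> B;
  bigvee    : forall I : Type, (I -> B) -> B;
  bigotimes : forall I : Type, (I -> B) -> B;
  bigoplus  : forall I : Type, (I -> B) -> B;
  bneg : B -> B
}.

Section Bilattice.
Variables (B : Type) (L : bilattice_ops B).

Definition pair_fam (a b : B) : bool -> B := fun x => if x then a else b.
Definition bwedge (a b : B) := bigwedge L (pair_fam a b).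
Definition bvee (a b : B) := bigvee L (pair_fam a b).
Definition botimes (a b : B) := bigotimes L (pair_fam a b).
Definition boplus (a b : B) := bigoplus L (pair_fam a b).

Definition empty_fam : Empty_set -> B := fun e => match e with end.
(* bottom and top of <=_k *)
Definition bU : B := bigoplus L empty_fam.
Definition bO : B := bigotimes L empty_fam.

Definition partial_order (le : B -> B -> Prop) :=
  (forall a, le a a) /\ (forall a b, le a b -> le b a -> a = b) /\
  (forall a b c, le a b -> le b c -> le a c).

Definition is_inf (le : B -> B -> Prop) (inf : forall I : Type, (I -> B) -> B) :=
  forall (I : Type) (f : I -> B),
    (forall i, le (inf I f) (f i)) /\
    (forall x, (forall i, le x (f i)) -> le x (inf I f)).

Definition is_sup (le : B -> B -> Prop) (sup : forall I : Type, (I -> B) -> B) :=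
  forall (I : Type) (f : I -> B),
    (forall i, le (f i) (sup I f)) /\
    (forall x, (forall i, le (f i) x) -> le (sup I f) x).

Definition complete_bilattice_neg : Prop :=
  partial_order (le_t L) /\ partial_order (le_k L) /\
  is_inf (le_t L) (bigwedge L) /\ is_sup (le_t L) (bigvee L) /\
  is_inf (le_k L) (bigotimes L) /\ is_sup (le_k L) (bigoplus L) /\
  (forall a b, le_t L a b -> le_t L (bneg L b) (bneg L a)) /\
  (forall a b, le_k L a b -> le_k L (bneg L a) (bneg L b)) /\
  (forall a, bneg L (bneg L a) = a).

Definition distr2 (op1 op2 : B -> B -> B) :=
  forall a b c, op1 a (op2 b c) = op2 (op1 a b) (op1 a c).

Definition distr_inf (op : B -> B -> B) (big : forall I : Type, (I -> B) -> B) :=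
  forall (I : Type) (f : I -> B) (a : B), inhabited I ->
    op a (big I f) = big I (fun i => op a (f i)).

Definition inf_distributive : Prop :=
  distr2 bwedge bvee /\ distr2 bwedge botimes /\ distr2 bwedge boplus /\
  distr2 bvee bwedge /\ distr2 bvee botimes /\ distr2 bvee boplus /\
  distr2 botimes bwedge /\ distr2 botimes bvee /\ distr2 botimes boplus /\
  distr2 boplus bwedge /\ distr2 boplus bvee /\ distr2 boplus botimes /\
  distr_inf bwedge (bigvee L) /\ distr_inf bwedge (bigotimes L) /\
  distr_inf bwedge (bigoplus L) /\
  distr_inf bvee (bigwedge L) /\ distr_inf bvee (bigotimes L) /\
  distr_inf bvee (bigoplus L) /\
  distr_inf botimes (bigwedge L) /\ distr_inf botimes (bigvee L) /\
  distr_inf botimes (bigoplus L) /\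
  distr_inf boplus (bigwedge L) /\ distr_inf boplus (bigvee L) /\
  distr_inf boplus (bigotimes L).

Definition mono2 (le : B -> B -> Prop) (op : B -> B -> B) :=
  forall a a' b b', le a a' -> le b b' -> le (op a b) (op a' b').

Definition mono_inf (le : B -> B -> Prop) (big : forall I : Type, (I -> B) -> B) :=
  forall (I : Type) (f g : I -> B), (forall i, le (f i) (g i)) -> le (big I f) (big I g).

Definition inf_interlaced : Prop :=
  mono2 (le_t L) bwedge /\ mono2 (le_k L) bwedge /\
  mono2 (le_t L) bvee /\ mono2 (le_k L) bvee /\
  mono2 (le_t L) botimes /\ mono2 (le_k L) botimes /\
  mono2 (le_t L) boplus /\ mono2 (le_k L) boplus /\
  mono_inf (le_t L) (bigwedge L) /\ mono_inf (le_k L) (bigwedge L) /\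
  mono_inf (le_t L) (bigvee L) /\ mono_inf (le_k L) (bigvee L) /\
  mono_inf (le_t L) (bigotimes L) /\ mono_inf (le_k L) (bigotimes L) /\
  mono_inf (le_t L) (bigoplus L) /\ mono_inf (le_k L) (bigoplus L).

End Bilattice.

(** Closed formulas over ground atoms [Atom] (the Herbrand base), closed
    terms [Term] and truth values [B]; quantified bodies are given as
    functions of the closed term substituted for the bound variable. *)
Inductive formula (Term Atom B : Type) : Type :=
| FAtom : Atom -> formula Term Atom B
| FNegAtom : Atom -> formula Term Atom B
| FConst : B -> formula Term Atom B
| FWedge : formula Term Atom B -> formula Term Atom B -> formula Term Atom B
| FVee : formula Term Atom B -> formula Term Atom B -> formula Term Atom B
| FOtimes : formula Term Atom B -> formula Term Atom B -> formula Term Atom B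
| FOplus : formula Term Atom B -> formula Term Atom B -> formula Term Atom B
| FExists : (Term -> formula Term Atom B) -> formula Term Atom B
| FForall : (Term -> formula Term Atom B) -> formula Term Atom B.

Section Eval.
Variables (B Term Atom : Type) (L : bilattice_ops B).

Fixpoint eval (I : Atom -> B) (phi : formula Term Atom B) : B :=
  match phi with
  | FAtom _ _ A => I A
  | FNegAtom _ _ A => bneg L (I A)
  | FConst _ _ v => v
  | FWedge X Y => bwedge L (eval I X) (eval I Y)
  | FVee X Y => bvee L (eval I X) (eval I Y)
  | FOtimes X Y => botimes L (eval I X) (eval I Y)
  | FOplus X Y => boplus L (eval I X) (eval I Y)
  | FExists f => bigvee L (fun t : Term => eval I (f t))
  | FForall f => bigwedge L (fun t : Term => eval I (f t))
  end.

Definition part_of (I J : Atom -> B) : Prop :=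
  forall A, I A <> bU L -> I A = J A.

Definition equiv_I (I : Atom -> B) (phi : formula Term Atom B) (alpha : B) : Prop :=
  forall J : Atom -> B, part_of I J -> eval J phi = alpha.

Definition I_O (I : Atom -> B) : Atom -> B :=
  fun A => if excluded_middle_informative (I A = bU L) then bO L else I A.
End Eval.

From Stdlib Require Import ClassicalEpsilon.
Set Implicit Arguments.

(* Evaluation of a closed formula is monotone in the knowledge ordering of the
   atom values, by interlacing and k-monotonicity of negation.  Every J with
   I <= J lies pointwise between I (unknown atoms at the k-bottom U) and I_O
   (unknown atoms at the k-top O), so J(B) is squeezed between I(B) and I_O(B);
   conversely I and I_O are themselves extensions of I. *)

Section KnowledgeOrder.

Variables (B : Type) (L : bilattice_ops B).
Hypothesis HL : complete_bilattice_neg L.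

Lemma le_k_refl (a : B) : le_k L a a.
Proof. destruct HL as [_ [[Hrefl _] _]]; apply Hrefl. Qed.

Lemma le_k_antisym (a b : B) : le_k L a b -> le_k L b a -> a = b.
Proof. destruct HL as [_ [[_ [Hanti _]] _]]; apply Hanti. Qed.

Lemma bU_le_k (a : B) : le_k L (bU L) a.
Proof.
  destruct HL as [_ [_ [_ [_ [_ [Hsup _]]]]]].
  apply (proj2 (Hsup Empty_set (empty_fam B))); intros [].
Qed.

Lemma le_k_bO (a : B) : le_k L a (bO L).
Proof.
  destruct HL as [_ [_ [_ [_ [Hinf _]]]]].
  apply (proj2 (Hinf Empty_set (empty_fam B))); intros [].
Qed.

Hypothesis HI : inf_interlaced L.
Variables Term Atom : Type.

Definition le_k_interp (I J : Atom -> B) : Prop := forall A, le_k L (I A) (J A).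

Lemma eval_le_k (I J : Atom -> B) (phi : formula Term Atom B) :
  le_k_interp I J -> le_k L (eval L I phi) (eval L J phi).
Proof.
  intros HIJ.
  destruct HL as [_ [_ [_ [_ [_ [_ [_ [Hneg_k _]]]]]]]].
  destruct HI as [_ [Hwedge [_ [Hvee [_ [Hotimes [_ [Hoplus
                 [_ [Hbigwedge [_ [Hbigvee _]]]]]]]]]]]].
  induction phi; simpl; auto using le_k_refl.
Qed.

Lemma eval_le_k_squeeze (I J K : Atom -> B) (phi : formula Term Atom B) (alpha : B) :
  le_k_interp I J -> le_k_interp J K ->
  eval L I phi = alpha -> eval L K phi = alpha -> eval L J phi = alpha.
Proof.
  intros HIJ HJK HI_alpha HK_alpha.
  apply le_k_antisym.
  - rewrite <- HK_alpha; apply eval_le_k; exact HJK.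
  - rewrite <- HI_alpha; apply eval_le_k; exact HIJ.
Qed.

Lemma part_of_refl (I : Atom -> B) : part_of L I I.
Proof. intros A _; reflexivity. Qed.

Lemma part_of_I_O (I : Atom -> B) : part_of L I (I_O L I).
Proof.
  intros A HA; unfold I_O.
  destruct (excluded_middle_informative (I A = bU L)); congruence.
Qed.

Lemma part_of_le_k (I J : Atom -> B) : part_of L I J -> le_k_interp I J.
Proof.
  intros HIJ A.
  destruct (excluded_middle_informative (I A = bU L)) as [HU | HnU].
  - rewrite HU; apply bU_le_k.
  - rewrite (HIJ A HnU); apply le_k_refl.
Qed.

Lemma part_of_le_k_I_O (I J : Atom -> B) : part_of L I J -> le_k_interp J (I_O L I).
Proof.
  intros HIJ A; unfold I_O.
  destruct (excluded_middle_informative (I A = bU L)) as [HU | HnU].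
  - apply le_k_bO.
  - rewrite (HIJ A HnU); apply le_k_refl.
Qed.

End KnowledgeOrder.

Theorem lemma1 (B Term Atom : Type) (L : bilattice_ops B)
  (HL : complete_bilattice_neg L) (HD : inf_distributive L)
  (HI : inf_interlaced L)
  (I : Atom -> B) (phi : formula Term Atom B) (alpha : B) :
  equiv_I L I phi alpha <->
  (eval L I phi = alpha /\ eval L (I_O L I) phi = alpha).
Proof.
  split.
  - intros Hequiv; split; apply Hequiv.
    + apply part_of_refl.
    + apply part_of_I_O.
  - intros [HI_alpha HIO_alpha] J HIJ.
    apply (eval_le_k_squeeze HL HI (I := I) (K := I_O L I)); auto.
    + apply part_of_le_k; assumption.
    + apply part_of_le_k_I_O; assumption.
Qed.
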